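(* Let $(H,G,t,\Phi)$ be a crossed module of Lie groups and let $\mathcal{B}_1:H\to H$, $\mathcal{B}_0:G\to G$ be smooth maps. Put $$\mathrm{Gr}(\mathcal{B}_1)=\{(\mathcal{B}_1(p),p)\mid p\in H\}\subset H\ltimes H,\qquad \mathrm{Gr}(\mathcal{B}_0)=\{(\mathcal{B}_0(a),a)\mid a\in G\}\subset G\ltimes G.$$ Then $(\mathcal{B}_1,\mathcal{B}_0)$ is a Rota-Baxter operator on $(H,G,t,\Phi)$ if and only if $\mathrm{Gr}(\mathcal{B}_1)$ and $\mathrm{Gr}(\mathcal{B}_0)$ are Lie subgroups of $H\ltimes H$ and $G\ltimes G$ respectively, the map $(t,t)(p,q)=(t(p),t(q))$ restricts to a Lie group homomorphism $\mathrm{Gr}(\mathcal{B}_1)\to\mathrm{Gr}(\mathcal{B}_0)$ (i.e. $(t(\mathcal{B}_1(p)),t(p))\in \mathrm{Gr}(\mathcal{B}_0)$), the action $\tilde\Phi$ restricts to an action of $\mathrm{Gr}(\mathcal{B}_0)$ on $\mathrm{Gr}(\mathcal{B}_1)$ by automorphisms, namely $$\tilde{\Phi}\big((\mathcal{B}_0(a),a)\big)(\mathcal{B}_1(p),p)=\Big(\Phi(\mathcal{B}_0(a))\mathcal{B}_1(p),\ \Phi(a\mathcal{B}_0(a))(p\mathcal{B}_1(p))\cdot\Phi(\mathcal{B}_0(a))\mathcal{B}_1(p)^{-1}\Big)\in\mathrm{Gr}(\mathcal{B}_1),$$ and $(\mathrm{Gr}(\mathcal{B}_1),\mathrm{Gr}(\mathcal{B}_0),(t,t),\tilde\Phi)$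 is a crossed module of Lie groups.
   Context: A crossed module of Lie groups is a quadruple $(H,G,t,\Phi)$ where $H,G$ are Lie groups, $t:H\to G$ is a Lie group homomorphism and $\Phi:G\to\mathrm{Aut}(H)$ is a smooth action of $G$ on $H$ by automorphisms such that $\Phi(t(p))q=pqp^{-1}$ and $t(\Phi(a)p)=a\,t(p)\,a^{-1}$ for all $p,q\in H$, $a\in G$. A Rota-Baxter operator on a Lie group $G$ is a smooth map $\mathcal{B}:G\to G$ with $\mathcal{B}(a)\mathcal{B}(b)=\mathcal{B}(a\mathcal{B}(a)b\mathcal{B}(a)^{-1})$ for all $a,b\in G$. A Rota-Baxter operator on a crossed module of Lie groups $(H,G,t,\Phi)$ is a pair $(\mathcal{B}_1,\mathcal{B}_0)$ of smooth maps $\mathcal{B}_1:H\to H$, $\mathcal{B}_0:G\to G$ such that (i) $\mathcal{B}_1,\mathcal{B}_0$ are Rota-Baxter operators on $H$, $G$; (ii) $t\circ\mathcal{B}_1=\mathcal{B}_0\circ t$; (iii) $\Phi(\mathcal{B}_0(a))\mathcal{B}_1(p)=\mathcal{B}_1\big(\Phi(a\mathcal{B}_0(a))(p\mathcal{B}_1(p))\cdot\Phi(\mathcal{B}_0(a))\mathcal{B}_1(p)^{-1}\big)$ for all $a\in G,p\in H$. $G\ltimes G$ denotes $G\times G$ with product $(a,b)(c,d)=(ac,\ b\,a\,d\,a^{-1})$, and similarly $H\ltimes H$ with $(p,q)(r,s)=(pr,\ q\,p\,s\,p^{-1})$. The map $\tilde\Phi:G\ltimes G\to\mathrm{Aut}(H\ltimes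 H)$ is $\tilde{\Phi}((a,b))(p,q)=\big(\Phi(a)p,\ \Phi(ba)(qp)\cdot\Phi(a)p^{-1}\big)$; it is known that $(H\ltimes H,G\ltimes G,(t,t),\tilde\Phi)$ is a crossed module of Lie groups. *)

Set Implicit Arguments.

Record GOps := {
  carrier :> Type;
  gmul : carrier -> carrier -> carrier;
  gone : carrier;
  ginv : carrier -> carrier }.

Arguments gmul {g} _ _.
Arguments gone {g}.
Arguments ginv {g} _.

Definition is_group (G : GOps) : Prop :=
  (forall a b c : G, gmul a (gmul b c) = gmul (gmul a b) c) /\
  (forall a : G, gmul gone a = a) /\
  (forall a : G, gmul a gone = a) /\
  (forall a : G, gmul (ginv a) a = gone) /\
  (forall a : G, gmul a (ginv a) = gone).

Definition is_subgroup {G : GOps} (S : G -> Prop) : Prop :=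
  S gone /\ (forall a b, S a -> S b -> S (gmul a b)) /\ (forall a, S a -> S (ginv a)).

Definition crossed_module_on {H G : GOps} (SH : H -> Prop) (SG : G -> Prop)
    (t : H -> G) (Phi : G -> H -> H) : Prop :=
  is_subgroup SH /\ is_subgroup SG /\
  (forall p, SH p -> SG (t p)) /\
  (forall p q, SH p -> SH q -> t (gmul p q) = gmul (t p) (t q)) /\
  (forall a p, SG a -> SH p -> SH (Phi a p)) /\
  (forall a p q, SG a -> SH p -> SH q -> Phi a (gmul p q) = gmul (Phi a p) (Phi a q)) /\
  (forall a q, SG a -> SH q -> exists p, SH p /\ Phi a p = q /\
                    forall p', SH p' -> Phi a p' = q -> p' = p) /\
  (forall p, SH p -> Phi gone p = p) /\
  (forall a b p, SG a -> SG b -> SH p -> Phi (gmul a b) p = Phi a (Phi b p)) /\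
  (forall p q, SH p -> SH q -> Phi (t p) q = gmul (gmul p q) (ginv p)) /\
  (forall a p, SG a -> SH p -> t (Phi a p) = gmul (gmul a (t p)) (ginv a)).

Definition crossed_module {H G : GOps} (t : H -> G) (Phi : G -> H -> H) : Prop :=
  @crossed_module_on H G (fun _ => True) (fun _ => True) t Phi.

Definition rota_baxter {G : GOps} (B : G -> G) : Prop :=
  forall a b : G, gmul (B a) (B b) = B (gmul (gmul (gmul a (B a)) b) (ginv (B a))).

Definition rota_baxter_cm {H G : GOps} (t : H -> G) (Phi : G -> H -> H)
    (B1 : H -> H) (B0 : G -> G) : Prop :=
  rota_baxter B1 /\ rota_baxter B0 /\
  (forall p, t (B1 p) = B0 (t p)) /\
  (forall a p, Phi (B0 a) (B1 p) =
     B1 (gmul (Phi (gmul a (B0 a)) (gmul p (B1 p))) (ginv (Phi (B0 a) (B1 p))))).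

Definition sdprod (G : GOps) : GOps := {|
  carrier := (G * G)%type;
  gmul := fun x y => (gmul (fst x) (fst y),
                      gmul (gmul (gmul (snd x) (fst x)) (snd y)) (ginv (fst x)));
  gone := (gone, gone);
  ginv := fun x => (ginv (fst x), gmul (gmul (ginv (fst x)) (ginv (snd x))) (fst x)) |}.

Definition tt {H G : GOps} (t : H -> G) : sdprod H -> sdprod G :=
  fun x => (t (fst x), t (snd x)).

Definition Phi_tilde {H G : GOps} (Phi : G -> H -> H) : sdprod G -> sdprod H -> sdprod H :=
  fun x y => (Phi (fst x) (fst y),
              gmul (Phi (gmul (snd x) (fst x)) (gmul (snd y) (fst y)))
                   (ginv (Phi (fst x) (fst y)))).

Definition graph {G : GOps} (B : G -> G) : sdprod G -> Prop :=
  fun x => fst x = B (snd x).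

(* The Rota-Baxter identity for B says exactly that the graph of B is closed
   under the product of G ⋉ G, and closure under the unit and inverses then
   comes for free; conditions (ii) and (iii) literally say that (t,t) maps
   Gr(B1) into Gr(B0) and that Φ̃ maps Gr(B0) × Gr(B1) into Gr(B1).  Since
   (H ⋉ H, G ⋉ G, (t,t), Φ̃) is a crossed module, its restriction to any pair
   of subgroups stable under (t,t) and Φ̃ is again a crossed module. *)

Set Implicit Arguments.

Section GroupFacts.

Variable G : GOps.
Hypothesis hG : is_group G.

Lemma mulgA (a b c : G) : gmul a (gmul b c) = gmul (gmul a b) c.
Proof. apply hG. Qed.

Lemma mul1g (a : G) : gmul gone a = a.
Proof. apply hG. Qed.

Lemma mulg1 (a : G) : gmul a gone = a.
Proof. apply hG. Qed.

Lemma mulVg (a : G) : gmul (ginv a) a = gone.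
Proof. apply hG. Qed.

Lemma mulgV (a : G) : gmul a (ginv a) = gone.
Proof. apply hG. Qed.

Lemma mulKg (a x : G) : gmul (ginv a) (gmul a x) = x.
Proof. now rewrite mulgA, mulVg, mul1g. Qed.

Lemma mulKVg (a x : G) : gmul a (gmul (ginv a) x) = x.
Proof. now rewrite mulgA, mulgV, mul1g. Qed.

Lemma invg_unique (a b : G) : gmul a b = gone -> b = ginv a.
Proof. intro E. now rewrite <- (mulKg a b), E, mulg1. Qed.

Lemma invMg (a b : G) : ginv (gmul a b) = gmul (ginv b) (ginv a).
Proof.
  symmetry. apply invg_unique.
  now rewrite <- mulgA, mulKVg, mulgV.
Qed.

Lemma invgK (a : G) : ginv (ginv a) = a.
Proof. symmetry. apply invg_unique, mulVg. Qed.

Lemma invg1 : ginv (@gone G) = gone.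
Proof. symmetry. apply invg_unique, mul1g. Qed.

Lemma idempotent_eq1 (a : G) : gmul a a = a -> a = gone.
Proof. intro E. now rewrite <- (mulKg a a), E, mulVg. Qed.

End GroupFacts.

Ltac destruct_pairs :=
  repeat match goal with
  | x : carrier (sdprod _) |- _ => destruct x
  | x : _ * _ |- _ => destruct x
  end.

Lemma sdprod_group (G : GOps) : is_group G -> is_group (sdprod G).
Proof.
  intro hG.
  repeat split; intros; destruct_pairs; simpl; f_equal;
    repeat rewrite ?mul1g, ?mulg1, ?mulVg, ?mulgV, ?invg1, ?invMg, ?invgK,
      <- ?mulgA, ?mulKg, ?mulKVg by exact hG;
    reflexivity.
Qed.

Lemma subgroup_total (G : GOps) : is_subgroup (fun _ : G => True).
Proof. repeat split. Qed.

Lemma action_on_bijective (H G : GOps) (hG : is_group G) (SH : H -> Prop)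
    (SG : G -> Prop) (Phi : G -> H -> H) :
  is_subgroup SG ->
  (forall a p, SG a -> SH p -> SH (Phi a p)) ->
  (forall p, SH p -> Phi gone p = p) ->
  (forall a b p, SG a -> SG b -> SH p -> Phi (gmul a b) p = Phi a (Phi b p)) ->
  forall a q, SG a -> SH q ->
    exists p, SH p /\ Phi a p = q /\ forall p', SH p' -> Phi a p' = q -> p' = p.
Proof.
  intros (_ & _ & SG_inv) Phi_stable Phi_one Phi_mul a q Ha Hq.
  exists (Phi (ginv a) q). split; [|split].
  - apply Phi_stable; auto.
  - rewrite <- Phi_mul, (mulgV hG); auto.
  - intros p' Hp' <-.
    rewrite <- Phi_mul, (mulVg hG), Phi_one; auto.
Qed.

Lemma crossed_module_restrict (H G : GOps) (hG : is_group G)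
    (t : H -> G) (Phi : G -> H -> H) (SH : H -> Prop) (SG : G -> Prop) :
  crossed_module t Phi -> is_subgroup SH -> is_subgroup SG ->
  (forall p, SH p -> SG (t p)) ->
  (forall a p, SG a -> SH p -> SH (Phi a p)) ->
  crossed_module_on SH SG t Phi.
Proof.
  intros (_ & _ & _ & t_mul & _ & Phi_mulr & _ & Phi_one & Phi_mull & Phi_t & t_Phi)
    SubH SubG t_stable Phi_stable.
  split; [exact SubH|split; [exact SubG|]].
  repeat split; auto.
  apply action_on_bijective; auto.
Qed.

Section CrossedModuleFacts.

Variables H G : GOps.
Hypotheses (hH : is_group H) (hG : is_group G).
Variables (t : H -> G) (Phi : G -> H -> H).
Hypothesis hcm : crossed_module t Phi.

Lemma tM p q : t (gmul p q) = gmul (t p) (t q).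
Proof. apply hcm; auto. Qed.

Lemma PhiMr a p q : Phi a (gmul p q) = gmul (Phi a p) (Phi a q).
Proof. apply hcm; auto. Qed.

Lemma PhiMl a b p : Phi (gmul a b) p = Phi a (Phi b p).
Proof. apply hcm; auto. Qed.

Lemma Phi1l p : Phi gone p = p.
Proof. apply hcm; auto. Qed.

Lemma Phi_t p q : Phi (t p) q = gmul (gmul p q) (ginv p).
Proof. apply hcm; auto. Qed.

Lemma t_Phi a p : t (Phi a p) = gmul (gmul a (t p)) (ginv a).
Proof. apply hcm; auto. Qed.

Lemma t1 : t gone = gone.
Proof. apply (idempotent_eq1 hG). now rewrite <- tM, (mul1g hH). Qed.

Lemma tV p : t (ginv p) = ginv (t p).
Proof. apply (invg_unique hG). now rewrite <- tM, (mulgV hH), t1. Qed.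

Lemma Phi1r a : Phi a gone = gone.
Proof. apply (idempotent_eq1 hH). now rewrite <- PhiMr, (mul1g hH). Qed.

Lemma PhiVr a p : Phi a (ginv p) = ginv (Phi a p).
Proof. apply (invg_unique hH). now rewrite <- PhiMr, (mulgV hH), Phi1r. Qed.

Ltac crossed_module_simpl :=
  repeat progress rewrite
    <- ?(mulgA hH), <- ?(mulgA hG), ?(mul1g hH), ?(mul1g hG), ?(mulg1 hH),
    ?(mulg1 hG), ?(mulVg hH), ?(mulVg hG), ?(mulgV hH), ?(mulgV hG),
    ?(mulKg hH), ?(mulKg hG), ?(invMg hH), ?(invMg hG), ?(invgK hH),
    ?(invgK hG), ?tM, ?PhiMr, ?PhiMl, ?Phi1l, ?Phi_t, ?t_Phi, ?tV, ?Phi1r,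
    ?PhiVr.

Ltac pairwise_simpl :=
  intros; destruct_pairs;
  unfold tt, Phi_tilde; simpl; f_equal; crossed_module_simpl; reflexivity.

Lemma crossed_module_sdprod : crossed_module (tt t) (Phi_tilde Phi).
Proof.
  assert (Phi_tilde_one : forall p, Phi_tilde Phi (gone (g := sdprod G)) p = p)
    by pairwise_simpl.
  assert (Phi_tilde_mul : forall (a b : sdprod G) p,
             Phi_tilde Phi (gmul a b) p = Phi_tilde Phi a (Phi_tilde Phi b p))
    by pairwise_simpl.
  repeat split; auto; try pairwise_simpl.
  apply action_on_bijective; auto using sdprod_group, subgroup_total.
Qed.

End CrossedModuleFacts.

Section RotaBaxterGraph.

Variable G : GOps.
Hypothesis hG : is_group G.
Variable B : G -> G.

Lemma rota_baxter1 : rota_baxter B -> B gone = gone.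
Proof.
  intro RB. apply (idempotent_eq1 hG).
  now rewrite RB, (mul1g hG), (mulg1 hG), (mulgV hG).
Qed.

Lemma rota_baxterV (a : G) : rota_baxter B ->
  B (gmul (gmul (ginv (B a)) (ginv a)) (B a)) = ginv (B a).
Proof.
  intro RB. apply (invg_unique hG).
  rewrite RB, <- !(mulgA hG), (mulKVg hG), (mulKVg hG), (mulgV hG).
  exact (rota_baxter1 RB).
Qed.

Lemma rota_baxter_graph_subgroup : rota_baxter B <-> is_subgroup (graph B).
Proof.
  split.
  - intro RB. split; [|split].
    + exact (eq_sym (rota_baxter1 RB)).
    + intros [a1 a2] [b1 b2]; unfold graph; simpl; intros -> ->. apply RB.
    + intros [a1 a2]; unfold graph; simpl; intros ->.
      exact (eq_sym (rota_baxterV a2 RB)).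
  - intros (_ & graph_mul & _) a b.
    exact (graph_mul (B a, a) (B b, b) eq_refl eq_refl).
Qed.

End RotaBaxterGraph.

Theorem theorem2p4 (H G : GOps) (hH : is_group H) (hG : is_group G)
    (t : H -> G) (Phi : G -> H -> H) (hcm : crossed_module t Phi)
    (B1 : H -> H) (B0 : G -> G) :
  rota_baxter_cm t Phi B1 B0 <->
  (is_subgroup (graph B1) /\ is_subgroup (graph B0) /\
   (forall p, graph B0 (tt t (B1 p, p))) /\
   (forall a p, graph B1 (Phi_tilde Phi (B0 a, a) (B1 p, p))) /\
   crossed_module_on (graph B1) (graph B0) (tt t) (Phi_tilde Phi)).
Proof.
  split.
  - intros (RB1 & RB0 & t_B & Phi_B).
    assert (Sub1 : is_subgroup (graph B1)) by now apply rota_baxter_graph_subgroup.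
    assert (Sub0 : is_subgroup (graph B0)) by now apply rota_baxter_graph_subgroup.
    split; [exact Sub1|split; [exact Sub0|split; [exact t_B|split; [exact Phi_B|]]]].
    apply crossed_module_restrict;
      auto using sdprod_group, crossed_module_sdprod.
    + intros [p1 p2]; unfold graph, tt; simpl; intros ->. apply t_B.
    + intros [a1 a2] [p1 p2]; unfold graph; simpl; intros -> ->. apply Phi_B.
  - intros (Sub1 & Sub0 & t_B & Phi_B & _).
    repeat split; try assumption.
    + now apply (rota_baxter_graph_subgroup hH).
    + now apply (rota_baxter_graph_subgroup hG).
Qed.
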